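(* Let $\mathbb{P}$ be a Pawlikowski lattice satisfying $\mathsf{S}_1(\mathbb{V}_1,\mathbb{V}_1)$. Then Player I does not have a winning strategy in the game $\mathsf{G}_1(\mathbb{V}_1,\mathbb{V}_1)$.
   Context: A lattice is a poset where any two elements have a supremum and an infimum; it is bounded if it has a minimum $0$ and a maximum $1$. A prime element is $q\neq 1$ with: $a\wedge b\leq q$ implies $a\leq q$ or $b\leq q$. Enough prime elements: whenever $a\not\leq b$ there is a prime $q$ with $b\leq q$, $a\not\leq q$. A Pawlikowski lattice is a bounded lattice with enough prime elements such that $(\sup A)\wedge b=\sup\{a\wedge b:a\in A\}$ for every $b\in\mathbb{P}$ and every subset $A\subseteq\mathbb{P}$ having a supremum. $\mathbb{V}_1$ is the family of subsets $A\subseteq\mathbb{P}$ with $\sup A=1$. $\mathsf{S}_1(\mathbb{V}_1,\mathbb{V}_1)$: for every sequence $(A_n)_{n\in\omega}$ in $\mathbb{V}_1$ there are $a_n\in A_n$ with $\sup\{a_n:n\in\omega\}=1$. The game $\mathsf{G}_1(\mathbb{V}_1,\mathbb{V}_1)$: in inning $n\in\omega$ Player I plays $A_n\in\mathbb{V}_1$ and Player II picks $a_n\in A_n$; Player II wins if $\sup\{a_n:n\in\omega\}=1$, otherwise Player I wins. A strategy for Player I assigns Player I's move to each finite sequence of Player II's previous moves; it is winning if Player I wins every play following it. *)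

From HB Require Import structures.
From mathcomp Require Import all_boot all_order.
Set Implicit Arguments. Unset Strict Implicit. Unset Printing Implicit Defensive.
Import Order.TTheory.
Local Open Scope order_scope.

Section Pawlikowski.
Context {d : Order.disp_t} {T : tbLatticeType d}.

Definition is_sup (A : T -> Prop) (s : T) : Prop :=
  (forall a, A a -> a <= s) /\ (forall u, (forall a, A a -> a <= u) -> s <= u).

Definition prime_elt (q : T) : Prop :=
  q != \top /\ forall a b, a `&` b <= q -> a <= q \/ b <= q.

Definition enough_primes : Prop :=
  forall a b : T, ~ (a <= b) -> exists q, prime_elt q /\ b <= q /\ ~ (a <= q).

Definition meet_distributes_sup : Prop :=
  forall (b : T) (A : T -> Prop) (s : T), is_sup A s ->
    is_sup (fun x => exists2 a, A a & x = a `&` b) (s `&` b).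

Definition pawlikowski : Prop := enough_primes /\ meet_distributes_sup.

Definition V1 (A : T -> Prop) : Prop := is_sup A \top.

Definition range_of (a : nat -> T) : T -> Prop := fun x => exists n, x = a n.

Definition S1_V1_V1 : Prop :=
  forall An : nat -> (T -> Prop), (forall n, V1 (An n)) ->
    exists a : nat -> T, (forall n, An n (a n)) /\ V1 (range_of a).

(* A strategy for Player I: to each finite sequence of Player II's previous
   moves it assigns a legal move (an element of V_1). *)
Definition strategyI (sigma : seq T -> (T -> Prop)) : Prop :=
  forall s, V1 (sigma s).

Definition follows (sigma : seq T -> (T -> Prop)) (a : nat -> T) : Prop :=
  forall n, sigma (mkseq a n) (a n).

Definition winning_strategyI (sigma : seq T -> (T -> Prop)) : Prop :=
  strategyI sigma /\ forall a, follows sigma a -> ~ V1 (range_of a).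

End Pawlikowski.

From HB Require Import structures.
From mathcomp Require Import all_boot all_order.
From Stdlib Require Import ClassicalEpsilon.
Set Implicit Arguments. Unset Strict Implicit. Unset Printing Implicit Defensive.
Import Order.TTheory.
Local Open Scope order_scope.

(* With enough primes, [sup A = 1] says that every prime [q] is avoided by some
   [a] in [A], i.e. [~~ (a <= q)]: primes play the role of points, and a finite
   meet avoids a prime iff each of its terms does.  Given a strategy of Player I,
   S1 applied to a constant sequence enumerates a V1 subfamily [u p 0, u p 1, ...]
   of each of its moves, so that plays of Player II are coded by sequences of
   indices.  Pawlikowski's argument then diagonalises twice.  First, S1 yields
   a nondecreasing [beta] such that every prime [q] is, for infinitely
   many [n], avoided at every position of length [n] with indices below
   [beta (n-1)] by one of the first [beta n] answers there.  Then S1, applied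
   to meets over [N+1] such levels of the least avoiding answers, gives,
   after a greedy choice of pairwise distinct levels, a single play of Player II
   whose moves avoid every prime. *)

Section V1Families.
Context {d : Order.disp_t} {T : tbLatticeType d}.
Implicit Types (a q : T) (A B : T -> Prop).

Lemma prime_nle_meet q a b : prime_elt q ->
  ~~ (a <= q) -> ~~ (b <= q) -> ~~ (a `&` b <= q).
Proof. by move=> [_ q_prime] aq bq; apply/negP => /q_prime[]; apply/negP. Qed.

Lemma prime_nle_meets (I : eqType) (r : seq I) (F : I -> T) q : prime_elt q ->
  (forall i, i \in r -> ~~ (F i <= q)) -> ~~ (\meet_(i <- r) F i <= q).
Proof.
move=> q_prime; elim: r => [|i r IHr] Fq; first by rewrite big_nil le1x; case: q_prime.
rewrite big_cons prime_nle_meet ?Fq ?mem_head // IHr // => j jr.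
by rewrite Fq // in_cons jr orbT.
Qed.

Lemma prime_nle_meets_eventually (I : eqType) (r : seq I) (F : I -> nat -> T) q :
  prime_elt q -> (forall i, {homo F i : m n / (m <= n)%N >-> m <= n}) ->
  (forall i, exists b, ~~ (F i b <= q)) -> exists b, ~~ (\meet_(i <- r) F i b <= q).
Proof.
move=> q_prime F_mono F_ev.
suff [b Fb] : exists b, forall i, i \in r -> ~~ (F i b <= q).
  by exists b; apply: prime_nle_meets.
elim: r => [|i r [b Fb]]; first by exists 0.
have [b' Fb'] := F_ev i.
exists (maxn b b') => j; rewrite in_cons => /predU1P[-> | jr].
  exact: contra (le_trans (F_mono _ _ _ (leq_maxr b b'))) Fb'.
exact: contra (le_trans (F_mono _ _ _ (leq_maxl b b'))) (Fb j jr).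
Qed.

Lemma V1_le A B : V1 A -> (forall a, A a -> exists2 b, B b & a <= b) -> V1 B.
Proof.
move=> [_ A_top] AB; split=> [b _|v v_ub]; first exact: lex1.
by apply: A_top => a /AB[b /v_ub bv ab]; apply: le_trans ab bv.
Qed.

Lemma S1_countable_subfamily A : @S1_V1_V1 d T -> V1 A ->
  exists a : nat -> T, (forall n, A (a n)) /\ V1 (range_of a).
Proof. by move=> S1 A_V1; apply: (S1 (fun=> A)). Qed.

Lemma S1_select_index (f : nat -> nat -> T) : @S1_V1_V1 d T ->
  (forall k, V1 (range_of (f k))) ->
  exists h : nat -> nat, V1 (range_of (fun k => f k (h k))).
Proof.
move=> S1 f_V1; have [a [a_f a_V1]] := S1 _ f_V1.
have [h a_h] := choice (fun k b => a k = f k b) a_f.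
exists h; apply: (V1_le a_V1) => _ [k ->].
by exists (f k (h k)); [exists k | rewrite a_h].
Qed.

Hypothesis primes : @enough_primes d T.

Lemma V1_primesP A : V1 A <-> forall q, prime_elt q -> exists2 a, A a & ~~ (a <= q).
Proof.
split=> [[_ A_top] q [q_ntop _] | A_cover].
  apply: NNPP => no_a; move: q_ntop; rewrite -le1x => /negP; apply.
  by apply: A_top => a Aa; apply/negPn/negP => aq; apply: no_a; exists a.
split=> [a _|v v_ub]; first exact: lex1.
apply/negPn/negP => top_nle_v; have [q [q_prime [vq _]]] := primes (negP top_nle_v).
have [a Aa aq] := A_cover q q_prime.
by move/negP: aq; apply; apply: le_trans (v_ub a Aa) vq.
Qed.

End V1Families.

Lemma exists_diagonal_bound (X : countType) (h : X -> nat -> nat) :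
  exists beta : nat -> nat, [/\ {homo beta : m n / (m <= n)%N},
    forall n, (0 < beta n)%N & forall x k, (h x k < beta (pickle x + k))%N].
Proof.
pose g n := \max_(j < n.+1) (if @unpickle X j is Some x then h x (n - j) else 0).
exists (fun n => (\max_(m < n.+1) g m).+1); split=> //.
  apply: homo_leq => [//|m n p|n]; first exact: leq_trans.
  by rewrite ltnS [leqRHS]big_ord_recr leq_maxl.
move=> x k; rewrite ltnS; set n := pickle x + k.
have x_n : (pickle x < n.+1)%N by rewrite ltnS leq_addr.
apply: leq_trans (leq_bigmax (ord_max : 'I_n.+1)).
by apply: leq_trans (leq_bigmax (Ordinal x_n)); rewrite /= pickleK addKn.
Qed.

Section GreedyChoice.
Variables (X : eqType) (x0 : X) (L : nat -> seq X).
Hypothesis L_uniq : forall N, uniq (L N).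
Hypothesis L_size : forall N, (N < size (L N))%N.

Let fresh N (prev : seq X) := head x0 [seq y <- L N | y \notin prev].
Fixpoint greedy_prefix N :=
  if N is N'.+1 then rcons (greedy_prefix N') (fresh N' (greedy_prefix N')) else [::].
Let greedy N := fresh N (greedy_prefix N).

Let greedy_spec N : greedy N \in L N /\ greedy N \notin greedy_prefix N.
Proof.
have size_prefix : size (greedy_prefix N) = N.
  by elim: N => //= N IH; rewrite size_rcons IH.
suff : greedy N \in [seq y <- L N | y \notin greedy_prefix N].
  by rewrite mem_filter => /andP[].
rewrite /greedy /fresh; case E: [seq y <- L N | _] => [|y l]; last exact: mem_head.
have L_prefix : {subset L N <= greedy_prefix N}.
  move=> y yL; apply: contraT => y_new.
  by move: (mem_filter (fun y => y \notin greedy_prefix N) y (L N)); rewrite E y_new yL.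
by have := uniq_leq_size (L_uniq N) L_prefix; rewrite size_prefix leqNgt L_size.
Qed.

Lemma greedy_injective_choice : exists2 r : nat -> X, injective r & forall N, r N \in L N.
Proof.
exists greedy; last by move=> N; case: (greedy_spec N).
have prefix_lt M N : (M < N)%N -> greedy M \in greedy_prefix N.
  elim: N => // N IH; rewrite ltnS leq_eqVlt => /predU1P[-> | MN] /=.
    by rewrite mem_rcons mem_head.
  by rewrite mem_rcons in_cons IH ?orbT.
move=> M N rMN; case: (ltngtP M N) => // [MN | NM].
  by have := (greedy_spec N).2; rewrite -rMN prefix_lt.
by have := (greedy_spec M).2; rewrite rMN prefix_lt.
Qed.

End GreedyChoice.

Lemma extend_along_injection (I J A : Type) (B : J -> A -> Prop) (r : I -> J) (f : I -> A) :
  injective r -> (forall j, exists a, B j a) -> (forall i, B (r i) (f i)) ->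
  exists g : J -> A, (forall i, g (r i) = f i) /\ forall j, B j (g j).
Proof.
move=> r_inj B_inhab Bf.
have [g gP] : exists g : J -> A, forall j, (forall i, r i = j -> g j = f i) /\ B j (g j).
  apply: (choice (fun j a => (forall i, r i = j -> a = f i) /\ B j a)) => j.
  have [[i <-] | no_i] := classic (exists i, r i = j).
    by exists (f i); split=> [i' /r_inj -> //|]; apply: Bf.
  by have [a Ba] := B_inhab j; exists a; split=> // i ri_j; case: no_i; exists i.
by exists g; split=> [i | j]; [apply: (gP _).1 | apply: (gP j).2].
Qed.

Lemma exists_uniq_seq (P : nat -> Prop) : (forall N, exists2 n, (N <= n)%N & P n) ->
  forall m, exists L : seq nat, [/\ uniq L, size L = m & forall n, n \in L -> P n].
Proof.
move=> P_often; elim=> [|m [L [L_uniq L_size L_P]]]; first by exists [::].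
have [n n_big Pn] := P_often (\max_(i <- L) i).+1.
exists (n :: L); split=> /=; last 2 first.
- by rewrite L_size.
- by move=> i /predU1P[-> | /L_P].
rewrite L_uniq andbT; apply: contraTN n_big => n_in.
by rewrite -ltnNge ltnS (leq_bigmax_seq (F := id)) ?n_in.
Qed.

Fixpoint bounded_seqs (n a : nat) : seq (seq nat) :=
  if n is n'.+1 then [seq rcons s c | s <- bounded_seqs n' a, c <- iota 0 a]
  else [:: [::]].

Lemma bounded_seqs_rcons n a s c :
  s \in bounded_seqs n a -> (c < a)%N -> rcons s c \in bounded_seqs n.+1 a.
Proof. by move=> s_in ca; apply: allpairs_f => //; rewrite mem_iota. Qed.

Lemma bounded_seqs_widen n a a' :
  (a <= a')%N -> {subset bounded_seqs n a <= bounded_seqs n a'}.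
Proof.
move=> aa'; elim: n => [|n IH] //= _ /allpairsP[[s c] [/= s_in c_in ->]].
apply: bounded_seqs_rcons (IH _ s_in) _.
by move: c_in; rewrite mem_iota add0n => /andP[_ /leq_trans]; apply.
Qed.

Definition prev_bound (beta : nat -> nat) (n : nat) : nat :=
  if n is n'.+1 then beta n' else 0.

Lemma last_mkseq (beta : nat -> nat) n : last 0 (mkseq beta n) = prev_bound beta n.
Proof. by case: n => [|n] //; rewrite mkseqS last_rcons. Qed.

Section EnumeratedStrategy.
Context {d : Order.disp_t} {T : tbLatticeType d}.
Hypothesis primes : @enough_primes d T.
Variable u : seq T -> nat -> T.
Hypothesis u_cover : forall p, V1 (range_of (u p)).

Lemma exists_answer_nle p q : prime_elt q -> exists c, ~~ (u p c <= q).
Proof.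
move=> q_prime; have [_ [c ->] ucq] := (V1_primesP primes _).1 (u_cover p) q q_prime.
by exists c.
Qed.

Definition position (s : seq nat) : seq T := foldl (fun p c => rcons p (u p c)) [::] s.

Lemma position_rcons s c : position (rcons s c) = rcons (position s) (u (position s) c).
Proof. by rewrite /position foldl_rcons. Qed.

Definition join_answers (s : seq nat) (b : nat) : T := \join_(0 <= c < b) u (position s) c.

Lemma join_answers_mono s : {homo join_answers s : b b' / (b <= b')%N >-> b <= b'}.
Proof.
move=> b b' bb'; apply/joinsP_seq => c; rewrite mem_index_iota => /andP[_ cb] _.
by apply: joins_sup_seq => //; rewrite mem_index_iota (leq_trans cb).
Qed.

Lemma join_answers_nleP s b q :
  reflect (exists2 c, (c < b)%N & ~~ (u (position s) c <= q)) (~~ (join_answers s b <= q)).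
Proof.
apply: (iffP idP) => [J_nle | [c cb ucq]].
  apply: NNPP => no_c; move/negP: J_nle; apply; apply/joinsP_seq => c.
  rewrite mem_index_iota => /andP[_ cb] _.
  by apply/negPn/negP => ucq; apply: no_c; exists c.
by apply: contra ucq => /joinsP_seq; apply; rewrite ?mem_index_iota.
Qed.

Lemma join_answers_eventually s q : prime_elt q -> exists b, ~~ (join_answers s b <= q).
Proof.
move=> /(exists_answer_nle (position s))[c ucq].
by exists c.+1; apply/join_answers_nleP; exists c.
Qed.

(* [meet_level n a b] avoids [q] iff at every position reached by [n] indices
   below [a], one of the first [b] answers avoids [q]. *)
Definition meet_level (n a b : nat) : T := \meet_(s <- bounded_seqs n a) join_answers s b.

Lemma meet_level_le n a a' b b' :
  (a' <= a)%N -> (b <= b')%N -> meet_level n a b <= meet_level n a' b'.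
Proof.
move=> a'a bb'; apply/meetsP_seq => s s_in _.
by apply: meets_max_seq (bounded_seqs_widen a'a s_in) _ _ => //; apply: join_answers_mono.
Qed.

Lemma meet_level_eventually n a q : prime_elt q -> exists b, ~~ (meet_level n a b <= q).
Proof.
move=> q_prime; apply: prime_nle_meets_eventually => // s.
  exact: join_answers_mono.
exact: join_answers_eventually.
Qed.

(* [chain_level t k b] avoids [q] iff there are [b_0 <= ... <= b_k = b] such that
   [meet_level (size t + i) b_(i-1) b_i] avoids [q] for all [i <= k], where
   [b_(-1) = last 0 t]. *)
Fixpoint chain_level (t : seq nat) (k b : nat) : T :=
  if k is k'.+1 then
    \join_(0 <= b' < b.+1) (chain_level t k' b' `&` meet_level (size t + k) b' b)
  else meet_level (size t) (last 0 t) b.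

Lemma chain_level_mono t k : {homo chain_level t k : b b' / (b <= b')%N >-> b <= b'}.
Proof.
case: k => [|k] b b' bb' /=; first exact: meet_level_le.
apply/joinsP_seq => c; rewrite mem_index_iota => /andP[_ cb] _.
apply: (joins_min_seq (x := c)) => //; first by rewrite mem_index_iota (leq_trans cb).
by apply: leI2 => //; apply: meet_level_le.
Qed.

Lemma chain_level_eventually t k q : prime_elt q -> exists b, ~~ (chain_level t k b <= q).
Proof.
move=> q_prime; elim: k => [|k [b0 Rb0]]; first exact: meet_level_eventually.
have [b1 Eb1] := meet_level_eventually (size t + k.+1) b0 q_prime.
have Eb : ~~ (meet_level (size t + k.+1) b0 (maxn b0 b1) <= q).
  exact: contra (le_trans (meet_level_le _ (leqnn _) (leq_maxr _ _))) Eb1.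
exists (maxn b0 b1); apply: contra (prime_nle_meet q_prime Rb0 Eb); apply: le_trans.
by apply: (joins_min_seq (x := b0)); rewrite ?mem_index_iota ?ltnS ?leq_maxl.
Qed.

Lemma chain_level_mkseq_le (beta : nat -> nat) q N : {homo beta : m n / (m <= n)%N} ->
  (forall n, (N <= n)%N -> meet_level n (prev_bound beta n) (beta n) <= q) ->
  forall k, chain_level (mkseq beta N) k (beta (N + k)) <= q.
Proof.
move=> beta_mono bad; elim=> [|k IH].
  by rewrite /= size_mkseq last_mkseq addn0 bad.
rewrite /= size_mkseq; apply/joinsP_seq => b _ _.
have [b_le | b_gt] := leqP b (beta (N + k)).
  by apply: leIxl; apply: le_trans IH; apply: chain_level_mono.
apply: leIxr; apply: le_trans (bad (N + k.+1) (leq_addr _ _)).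
by rewrite addnS meet_level_le // ltnW.
Qed.

Definition covers_often (beta : nat -> nat) : Prop :=
  forall q, prime_elt q -> forall N,
    exists2 n, (N <= n)%N & ~~ (meet_level n (prev_bound beta n) (beta n) <= q).

Hypothesis S1 : @S1_V1_V1 d T.

Lemma exists_covering_bound : exists beta : nat -> nat,
  [/\ {homo beta : m n / (m <= n)%N}, forall n, (0 < beta n)%N & covers_often beta].
Proof.
have chain_V1 t k : V1 (range_of (chain_level t (pickle t + k))).
  apply/(V1_primesP primes) => q /(chain_level_eventually t (pickle t + k))[b Rb].
  by exists (chain_level t (pickle t + k) b) => //; exists b.
(* The offset [pickle t] lets a single [beta] dominate the selections [hh t]
   for all the countably many [t]. *)
have [hh hh_cover] := choice _ (fun t => S1_select_index S1 (chain_V1 t)).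
have [beta [beta_mono beta_pos hh_lt]] := exists_diagonal_bound hh.
exists beta; split=> // q q_prime N; apply: NNPP => no_n.
have bad n : (N <= n)%N -> meet_level n (prev_bound beta n) (beta n) <= q.
  by move=> Nn; apply/negPn/negP => ok; apply: no_n; exists n.
set t := mkseq beta N.
have [_ [k ->] /negP] := (V1_primesP primes _).1 (hh_cover t) q q_prime; apply.
apply: le_trans (chain_level_mkseq_le beta_mono bad (pickle t + k)).
by apply: chain_level_mono; apply: leq_trans (ltnW (hh_lt t k)) (beta_mono _ _ (leq_addl _ _)).
Qed.

Fixpoint history (x : nat -> seq nat -> nat) (n : nat) : seq nat :=
  if n is n'.+1 then rcons (history x n') (x n' (history x n')) else [::].

Definition play (x : nat -> seq nat -> nat) (n : nat) : T :=
  u (position (history x n)) (x n (history x n)).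

Lemma mkseq_play x n : mkseq (play x) n = position (history x n).
Proof. by elim: n => [|n IH] //; rewrite mkseqS IH /= position_rcons. Qed.

Section Moves.
Variable beta : nat -> nat.

Definition bounded_moves (n : nat) (phi : seq nat -> nat) : Prop :=
  forall s, s \in bounded_seqs n (prev_bound beta n) -> (phi s < beta n)%N.

Definition meet_moves (n : nat) (phi : seq nat -> nat) : T :=
  \meet_(s <- bounded_seqs n (prev_bound beta n)) u (position s) (phi s).

(* [N+1] distinct levels in the [N]-th family leave room to assign pairwise
   distinct levels to all [N] greedily. *)
Definition level_meets (N : nat) : T -> Prop := fun x =>
  exists p : seq nat * (seq nat -> nat), [/\ uniq p.1, size p.1 = N.+1,
    forall n, n \in p.1 -> bounded_moves n p.2 & x = \meet_(n <- p.1) meet_moves n p.2].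

Lemma history_bounded x : {homo beta : m n / (m <= n)%N} ->
  (forall n, bounded_moves n (x n)) ->
  forall n, history x n \in bounded_seqs n (prev_bound beta n).
Proof.
move=> beta_mono x_bd; elim=> [|n IH] /=; first exact: mem_head.
apply: bounded_seqs_rcons; last exact: x_bd.
by apply: bounded_seqs_widen IH; case: n => //= n; apply: beta_mono.
Qed.

Lemma level_meets_V1 N : covers_often beta -> V1 (level_meets N).
Proof.
move=> beta_often; apply/(V1_primesP primes) => q q_prime.
have [L [L_uniq L_size L_good]] := exists_uniq_seq (beta_often q q_prime) N.+1.
pose phi s := ex_minn (exists_answer_nle (position s) q_prime).
have phi_nle s : ~~ (u (position s) (phi s) <= q) by rewrite /phi; case: ex_minnP.
have phi_min s c : ~~ (u (position s) c <= q) -> (phi s <= c)%N.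
  by rewrite /phi; case: ex_minnP => m _; apply.
exists (\meet_(n <- L) meet_moves n phi).
  exists (L, phi); split=> //= n n_L s s_in.
  have /join_answers_nleP[c cb ucq] : ~~ (join_answers s (beta n) <= q).
    by apply: contra (L_good n n_L); apply: le_trans; apply: meets_inf_seq.
  exact: leq_ltn_trans (phi_min _ _ ucq) cb.
by apply: prime_nle_meets => // n _; apply: prime_nle_meets => // s _.
Qed.

Lemma exists_covering_moves : covers_often beta ->
  exists (L : nat -> seq nat) (phi : nat -> seq nat -> nat),
    [/\ forall N, uniq (L N) /\ (N < size (L N))%N,
        forall N n, n \in L N -> bounded_moves n (phi N)
      & V1 (range_of (fun N => \meet_(n <- L N) meet_moves n (phi N)))].
Proof.
move=> beta_often; have [a [a_in a_V1]] := S1 (fun N => level_meets_V1 N beta_often).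
have [p pP] := choice _ a_in.
exists (fun N => (p N).1), (fun N => (p N).2); split.
- by move=> N; have [? -> _ _] := pP N.
- by move=> N; have [_ _ ? _] := pP N.
apply: (V1_le a_V1) => _ [N ->]; exists (a N) => //.
by have [_ _ _ aN] := pP N; exists N.
Qed.

End Moves.

Lemma exists_covering_play : exists x, V1 (range_of (play x)).
Proof.
have [beta [beta_mono beta_pos beta_often]] := exists_covering_bound.
have [L [phi [L_ok phi_bd cover]]] := exists_covering_moves beta_often.
have [r r_inj r_L] := greedy_injective_choice 0 (fun N => (L_ok N).1) (fun N => (L_ok N).2).
have zero_bounded n : bounded_moves beta n (fun=> 0) by move=> s _; apply: beta_pos.
have [x [x_r x_bd]] := extend_along_injection r_inj
  (fun n => ex_intro _ _ (zero_bounded n)) (fun N => phi_bd N _ (r_L N)).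
exists x; apply: (V1_le cover) => _ [N ->]; exists (play x (r N)); first by exists (r N).
apply: meets_max_seq (r_L N) _ _ => //; rewrite /play x_r.
exact: meets_inf_seq (history_bounded beta_mono x_bd (r N)) _.
Qed.

End EnumeratedStrategy.

Theorem theorem2p4 (d : Order.disp_t) (T : tbLatticeType d) :
  @pawlikowski d T -> @S1_V1_V1 d T ->
  ~ exists sigma : seq T -> (T -> Prop), winning_strategyI sigma.
Proof.
move=> [primes _] S1 [sigma [sigma_V1 sigma_wins]].
have [u u_sigma] := choice _ (fun p => S1_countable_subfamily S1 (sigma_V1 p)).
have [x x_V1] := exists_covering_play primes (fun p => (u_sigma p).2) S1.
apply: sigma_wins x_V1 => n; rewrite mkseq_play.
exact: (u_sigma _).1.
Qed.
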